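(* Let $V$ be a real vector space of finite even dimension $n$ with a quadratic form $Q$ of anti-Lorentz signature $(1,n-1)$, and let $\rho$ be a $c$-compatible irreducible representation of $\mathbb{C}l(V)$ on a finite-dimensional complex vector space $K$ with nondegenerate hermitian form $(\cdot,\cdot)$. Let $K=K_L\oplus K_R$ where $K_L$ (resp. $K_R$) is the $-1$ (resp. $+1$) eigenspace of the chirality operator $\chi$. Let $w\in V$ be a nonzero spacelike vector and $(\psi,\phi)_w:=(\psi,\rho(w)\phi)$. Then $K_L$ and $K_R$ are orthogonal to each other for $(\cdot,\cdot)_w$, and if $n>2$, the restriction of $(\cdot,\cdot)_w$ to each of $K_L$ and $K_R$ is neutral.
   Context: $Cl(V,Q)$ is the real Clifford algebra with $v^2=+Q(v)$, $\mathbb{C}l(V)$ its complexification with complex conjugation $c$, $T$ the linear antiautomorphism restricting to the identity on $V$, $a^\times=c(T(a))$. $\rho$ is $c$-compatible if $(\rho(a)\psi,\phi)=(\psi,\rho(a^\times)\phi)$. In the anti-Lorentzian setting a vector $v$ is timelike if $Q(v)>0$ and spacelike if $Q(v)<0$. The chirality operator is $\chi=(-i)^{n/2+q}\rho(\omega)$ with $q=n-1$ and $\omega=e_1\cdots e_n$ the volume element of a pseudo-orthonormal basis of $V$. A hermitian form is neutral if its positive and negative indices of inertia are equal. *)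

From HB Require Import structures.
From mathcomp Require Import all_boot all_order all_algebra.
From mathcomp Require Import reals.
From mathcomp Require Import complex.
Set Implicit Arguments. Unset Strict Implicit. Unset Printing Implicit Defensive.
Import Order.TTheory GRing.Theory Num.Theory.
Local Open Scope ring_scope.
Local Open Scope complex_scope.

Section CliffordDefs.
Variable R : realType.
Local Notation C := (R[i]).

Definition quadf n (G : 'M[R]_n) (v : 'rV[R]_n) : R := (v *m G *m v^T) 0 0.

(* Signature (1, n-1): the rows of an invertible matrix E form a
   pseudo-orthonormal basis: Q(e_0) = 1, Q(e_i) = -1 (i > 0), pairwise orthogonal. *)
Definition antiLorentz_diag n : 'M[R]_n :=
  diag_mx (\row_(i < n) (if (i : nat) == 0%N then 1 else -1)).
Definition pseudo_orthonormal_basis n (G E : 'M[R]_n) : Prop :=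
  E \in unitmx /\ E *m G *m E^T = antiLorentz_diag n.

(* An R-linear map rho : V -> End_C(K), K = C^m (column vectors), determined by
   the images Gam j of the standard basis vectors of R^n. *)
Definition cliff_rho n m (Gam : 'I_n -> 'M[C]_m) (v : 'rV[R]_n) : 'M[C]_m :=
  \sum_(j < n) (v 0 j)%:C *: Gam j.

Definition cliff_mono n m (Gam : 'I_n -> 'M[C]_m) (vs : seq 'rV[R]_n) : 'M[C]_m :=
  \prod_(v <- vs) cliff_rho Gam v.

(* rho extends to a representation of Cl(V,Q) (complexified): v^2 = Q(v). *)
Definition cliff_rep n m (G : 'M[R]_n) (Gam : 'I_n -> 'M[C]_m) : Prop :=
  forall v : 'rV[R]_n, cliff_rho Gam v * cliff_rho Gam v = (quadf G v)%:C%:M.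

Definition hform m (H : 'M[C]_m) (psi phi : 'cV[C]_m) : C :=
  ((map_mx conjc psi)^T *m H *m phi) 0 0.
Definition hermitian_mx m (H : 'M[C]_m) : Prop := (map_mx conjc H)^T = H.
Definition nondeg_herm m (H : 'M[C]_m) : Prop := hermitian_mx H /\ H \in unitmx.

(* c-compatibility: (rho(a) psi, phi) = (psi, rho(a^x) phi) for all a in Cl(V)_C.
   Cl(V)_C is spanned over C by products a = v_1...v_k of vectors, and
   (v_1...v_k)^x = c(T(v_1...v_k)) = v_k...v_1 (T antiautomorphism fixing V,
   c fixing the real vectors), with (z a)^x = conj(z) a^x; so the condition is
   exactly the following on the spanning monomials. *)
Definition c_compatible n m (Gam : 'I_n -> 'M[C]_m) (H : 'M[C]_m) : Prop :=
  forall (vs : seq 'rV[R]_n) (psi phi : 'cV[C]_m),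
    hform H (cliff_mono Gam vs *m psi) phi = hform H psi (cliff_mono Gam (rev vs) *m phi).

(* A subspace is encoded as the row space of U (rows = transposed vectors of K);
   invariance under the algebra generated by rho(V) is invariance under rho(V). *)
Definition cliff_irreducible n m (Gam : 'I_n -> 'M[C]_m) : Prop :=
  (0 < m)%N /\ forall U : 'M[C]_m,
    (forall v : 'rV[R]_n, (U *m (cliff_rho Gam v)^T <= U)%MS) ->
    \rank U = 0%N \/ row_full U.

(* Chirality operator chi = (-i)^(n/2 + q) rho(e_1 ... e_n), q = n - 1,
   where e_k = row k of E (pseudo-orthonormal basis). *)
Definition chirality n m (Gam : 'I_n -> 'M[C]_m) (E : 'M[R]_n) : 'M[C]_m :=
  (- 'i) ^+ (n./2 + (n - 1)) *: \prod_(k < n) cliff_rho Gam (row k E).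

(* Eigenspace {psi | A psi = c psi}, encoded as a row space (rows = psi^T). *)
Definition eigsp m (A : 'M[C]_m) (c : C) : 'M[C]_m := kermx (A - c%:M)^T.

Definition posdef_on m (f : 'cV[C]_m -> 'cV[C]_m -> C) (U : 'M[C]_m) : Prop :=
  forall x : 'rV[C]_m, (x <= U)%MS -> x != 0 -> 0 < f x^T x^T.
Definition negdef_on m (f : 'cV[C]_m -> 'cV[C]_m -> C) (U : 'M[C]_m) : Prop :=
  forall x : 'rV[C]_m, (x <= U)%MS -> x != 0 -> f x^T x^T < 0.

Definition pos_index m (f : 'cV[C]_m -> 'cV[C]_m -> C) (S : 'M[C]_m) (p : nat) : Prop :=
  (exists U : 'M[C]_m, (U <= S)%MS /\ \rank U = p /\ posdef_on f U) /\
  (forall U : 'M[C]_m, (U <= S)%MS -> posdef_on f U -> (\rank U <= p)%N).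
Definition neg_index m (f : 'cV[C]_m -> 'cV[C]_m -> C) (S : 'M[C]_m) (p : nat) : Prop :=
  (exists U : 'M[C]_m, (U <= S)%MS /\ \rank U = p /\ negdef_on f U) /\
  (forall U : 'M[C]_m, (U <= S)%MS -> negdef_on f U -> (\rank U <= p)%N).

Definition neutral_on m (f : 'cV[C]_m -> 'cV[C]_m -> C) (S : 'M[C]_m) : Prop :=
  exists p : nat, pos_index f S p /\ neg_index f S p.

End CliffordDefs.

(* Since n is even, the volume element e_1...e_n, hence chi, anticommutes with every rho(v),
   and c-compatibility makes chi skew-adjoint.  Hence (chi psi, rho(w) phi) =
   (psi, rho(w) chi phi), which forces (K_L, K_R)_w = 0.
   For n > 2 choose a spacelike u with B(w, u) = 0.  Then a = rho(w) rho(u) commutes with chi,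
   a^2 = -Q(w)Q(u) is a nonzero scalar, and (a psi, a psi)_w = -Q(w)Q(u) (psi, psi)_w with
   -Q(w)Q(u) < 0.  So the invertible map a preserves K_L and K_R and exchanges positive and
   negative definite subspaces of the same dimension, and the two indices of inertia agree. *)

From HB Require Import structures.
From mathcomp Require Import all_boot all_order all_algebra.
From mathcomp Require Import reals.
From mathcomp Require Import complex.
From mathcomp Require Import ring lra.
From Stdlib Require Import Classical.
Set Implicit Arguments. Unset Strict Implicit. Unset Printing Implicit Defensive.
Import Order.TTheory GRing.Theory Num.Theory.
Local Open Scope ring_scope.

Section AnticommutingProducts.
Variables (Rg : pzRingType) (I : eqType) (f : I -> Rg).
Hypothesis f_anticomm : forall j k, j != k -> f j * f k = - (f k * f j).

Lemma mulr_prod_anticomm j (s : seq I) :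
  f j * \prod_(k <- s) f k = (-1) ^+ count (predC1 j) s * (\prod_(k <- s) f k * f j).
Proof.
elim: s => [|k s IH]; first by rewrite !big_nil mul1r mulr1 expr0 mul1r.
rewrite !big_cons /=; have [->|nkj] := eqVneq k j => /=.
  by rewrite [in LHS]IH mulrA commr_sign -!mulrA.
rewrite add1n exprS mulrA f_anticomm 1?eq_sym // !mulNr mul1r.
by rewrite -[f k * f j * _]mulrA IH !mulrA commr_sign.
Qed.

Lemma prod_rev_anticomm (s : seq I) : uniq s ->
  \prod_(k <- rev s) f k = (-1) ^+ 'C(size s, 2) * \prod_(k <- s) f k.
Proof.
elim: s => [|k s IH]; first by rewrite !big_nil expr0 mul1r.
move=> /= /andP[ks us]; rewrite rev_cons -cats1 big_cat big_seq1 /= IH // big_cons.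
rewrite mulr_prod_anticomm.
have -> : count (predC1 k) s = size s.
  by apply/eqP; rewrite -all_count; apply/allP => x xs /=; apply: contraNneq ks => <-.
rewrite binS bin1 exprD !mulrA -!exprD -[in RHS]signr_odd.
by rewrite !oddD addbK signr_odd.
Qed.

End AnticommutingProducts.

Lemma ex_max_nat (P : nat -> Prop) (b : nat) :
  P 0%N -> (forall p, P p -> p <= b)%N -> exists2 p, P p & forall q, P q -> (q <= p)%N.
Proof.
elim: b => [|b IH] P0 Pb.
  by exists 0%N => // q /Pb; rewrite leqn0 => /eqP ->.
have [Pb1|nPb1] := classic (P b.+1); first by exists b.+1.
apply: IH => // p Pp; rewrite -ltnS ltn_neqAle Pb // andbT.
by apply: contraPneq nPb1 => <-.
Qed.

Lemma submx_mulmx_nz (F : fieldType) (k l p : nat) (U : 'M[F]_(k, l)) (A : 'M[F]_(l, p))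
    (x : 'rV[F]_p) :
  (x <= U *m A)%MS -> x != 0 -> exists2 y : 'rV_l, (y <= U)%MS & y != 0 /\ x = y *m A.
Proof.
move=> /submxP[D ->] nz; exists (D *m U); first exact: submxMl.
by split; [apply: contraNneq nz => e; rewrite mulmxA e mul0mx | rewrite mulmxA].
Qed.

Section InertiaFlip.
Variables (R : realType) (m : nat) (f : 'cV[R[i]]_m -> 'cV[R[i]]_m -> R[i]).
Variables (S a : 'M[R[i]]_m) (lam : R[i]).
Hypotheses (lam_lt0 : lam < 0) (a_unit : a \in unitmx).
Hypothesis S_stable : forall U : 'M_m, (U <= S)%MS -> (U *m a^T <= S)%MS.
(* Subspaces are row spaces, so a acts on their rows as a^T. *)
Hypothesis f_flip : forall y : 'rV_m, f (y *m a^T)^T (y *m a^T)^T = lam * f y^T y^T.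

Lemma posdef_on_flip U : posdef_on f U -> negdef_on f (U *m a^T).
Proof.
move=> posU x /submx_mulmx_nz h /h[y yU [y0 ->]].
by rewrite f_flip nmulr_rlt0 // posU.
Qed.

Lemma negdef_on_flip U : negdef_on f U -> posdef_on f (U *m a^T).
Proof.
move=> negU x /submx_mulmx_nz h /h[y yU [y0 ->]].
by rewrite f_flip nmulr_rgt0 // negU.
Qed.

Lemma neutral_on_flip : neutral_on f S.
Proof.
have rank_flip U : \rank (U *m a^T) = \rank U.
  by rewrite mxrankMfree // row_free_unit unitmx_tr.
pose P p := exists U : 'M[R[i]]_m, (U <= S)%MS /\ \rank U = p /\ posdef_on f U.
have P0 : P 0%N.
  exists 0; split; [exact: sub0mx | split; first exact: mxrank0].
  by move=> x; rewrite submx0 => /eqP ->; rewrite eqxx.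
have [|p [U0 [U0S [rU0 posU0]]] maxp] := @ex_max_nat P m P0.
  by move=> p [U [_ [<- _]]]; exact: rank_leq_row.
exists p; split; split.
- by exists U0.
- by move=> U US posU; apply: maxp; exists U.
- exists (U0 *m a^T); split; first exact: S_stable.
  by rewrite rank_flip; split; last exact: posdef_on_flip.
- move=> U US negU; rewrite -rank_flip; apply: maxp.
  by exists (U *m a^T); split; [exact: S_stable | split; last exact: negdef_on_flip].
Qed.

End InertiaFlip.

Lemma commr_mul_anticomm (Rg : pzRingType) (c a b : Rg) :
  a * c = - (c * a) -> b * c = - (c * b) -> GRing.comm c (a * b).
Proof.
move=> ac_anti bc_anti; have ca_anti : c * a = - (a * c) by rewrite ac_anti opprK.
have cb_anti : c * b = - (b * c) by rewrite bc_anti opprK.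
by rewrite /GRing.comm mulrA ca_anti mulNr -mulrA cb_anti mulrN opprK mulrA.
Qed.

Section AnticommutingMatrices.
Variables (Rg : comUnitRingType) (m : nat) (A B : 'M[Rg]_m) (x y : Rg).
Hypotheses (sqrA : A *m A = x%:M) (sqrB : B *m B = y%:M) (AB_anticomm : A *m B = - (B *m A)).

Lemma anticomm_sqr : (A *m B) *m (A *m B) = (- (x * y))%:M.
Proof.
have BA_anticomm : B *m A = - (A *m B) by rewrite AB_anticomm opprK.
rewrite mulmxA -(mulmxA A B A) BA_anticomm mulmxN mulNmx mulmxA sqrA -mulmxA sqrB.
by rewrite -scalar_mxM raddfN.
Qed.

Lemma anticomm_unitmx : x * y \is a GRing.unit -> A *m B \in unitmx.
Proof.
move=> xy_unit.
suff : (A *m B) *m ((- (x * y))^-1 *: (A *m B)) = 1%:M by case/mulmx1_unit.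
by rewrite -scalemxAr anticomm_sqr scale_scalar_mx mulVr ?unitrN.
Qed.

Lemma anticomm_sandwich : B *m A *m A *m A *m B = (- (x * y)) *: A.
Proof.
rewrite -(mulmxA B A A) sqrA mul_mx_scalar -!scalemxAl -mulmxA AB_anticomm.
by rewrite mulmxN mulmxA sqrB mul_scalar_mx scalerN scalerA scaleNr.
Qed.

End AnticommutingMatrices.

Lemma eigsp_stable (R : realType) m (chi a U : 'M[R[i]]_m) c :
  chi *m a = a *m chi -> (U <= eigsp chi c)%MS -> (U *m a^T <= eigsp chi c)%MS.
Proof.
move=> chi_a; rewrite /eigsp !sub_kermx => /eqP U_ker; apply/eqP.
have comm_shift : (chi - c%:M) *m a = a *m (chi - c%:M).
  by rewrite mulmxBl mulmxBr chi_a mul_scalar_mx mul_mx_scalar.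
by rewrite -mulmxA -trmx_mul comm_shift trmx_mul mulmxA U_ker mul0mx.
Qed.

Section HermitianForm.
Variables (R : realType) (m : nat) (H : 'M[R[i]]_m).

Lemma hformZl k psi phi : hform H (k *: psi) phi = k^* * hform H psi phi.
Proof. by rewrite /hform map_mxZ /= linearZ /= -!scalemxAl mxE. Qed.

Lemma hformZr k psi phi : hform H psi (k *: phi) = k * hform H psi phi.
Proof. by rewrite /hform -scalemxAr mxE. Qed.

Lemma hformNl psi phi : hform H (- psi) phi = - hform H psi phi.
Proof. by rewrite -scaleN1r hformZl rmorphN rmorph1 mulN1r. Qed.

Lemma hformNr psi phi : hform H psi (- phi) = - hform H psi phi.
Proof. by rewrite -scaleN1r hformZr mulN1r. Qed.

End HermitianForm.

Section BilinearForm.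
Variables (R : realType) (n : nat) (G : 'M[R]_n).

Definition bilf (u v : 'rV[R]_n) : R := (u *m G *m v^T) 0 0.

Lemma quadfE u : quadf G u = bilf u u.
Proof. by []. Qed.

Lemma bilfDl u v w : bilf (u + v) w = bilf u w + bilf v w.
Proof. by rewrite /bilf !mulmxDl mxE. Qed.

Lemma bilfDr u v w : bilf w (u + v) = bilf w u + bilf w v.
Proof. by rewrite /bilf linearD /= mulmxDr mxE. Qed.

Lemma bilfZl k u w : bilf (k *: u) w = k * bilf u w.
Proof. by rewrite /bilf -!scalemxAl mxE. Qed.

Lemma bilfZr k u w : bilf w (k *: u) = k * bilf w u.
Proof. by rewrite /bilf linearZ /= -scalemxAr mxE. Qed.

Lemma bilfC u w : G^T = G -> bilf u w = bilf w u.
Proof.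
move=> G_sym; rewrite /bilf -[in LHS](trmxK (u *m G *m w^T)) mxE.
by rewrite !trmx_mul trmxK G_sym mulmxA.
Qed.

Variable E : 'M[R]_n.
Hypothesis onb : pseudo_orthonormal_basis G E.

Lemma bilf_basis j k :
  bilf (row j E) (row k E) = if j == k then (if (j : nat) == 0%N then 1 else -1) else 0.
Proof.
have [_ onbE] := onb.
have -> : bilf (row j E) (row k E) = (E *m G *m E^T) j k.
  by rewrite /bilf -row_mul tr_row !mxE; apply: eq_bigr => l _; rewrite !mxE.
by rewrite onbE /antiLorentz_diag !mxE; case: (j == k); rewrite ?mulr1n ?mulr0n.
Qed.

Lemma exists_spacelike_orthogonal w : (2 < n)%N ->
  exists2 u, quadf G u < 0 & bilf w u = 0.
Proof.
move=> n_gt2; have n_gt1 : (1 < n)%N by apply: ltn_trans n_gt2.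
pose e1 := row (Ordinal n_gt1) E; pose e2 := row (Ordinal n_gt2) E.
have [q1 q2] : bilf e1 e1 = -1 /\ bilf e2 e2 = -1 by rewrite !bilf_basis !eqxx.
have [o12 o21] : bilf e1 e2 = 0 /\ bilf e2 e1 = 0 by rewrite !bilf_basis.
set b1 := bilf w e1; set b2 := bilf w e2.
have [b1_0|b1_neq0] := eqVneq b1 0; first by exists e1; rewrite // quadfE q1 ltrN10.
exists (b2 *: e1 + (- b1) *: e2); last by rewrite bilfDr !bilfZr mulNr mulrC subrr.
rewrite quadfE bilfDl !bilfDr !bilfZl !bilfZr q1 q2 o12 o21; clearbody b1 b2.
have : 0 < b1 ^+ 2 by rewrite exprn_even_gt0.
have : 0 <= b2 ^+ 2 by rewrite sqr_ge0.
nra.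
Qed.

End BilinearForm.

Lemma odd_half_predn_bin2 n : (0 < n)%N -> ~~ odd n -> odd (n./2 + (n - 1) + 'C(n, 2)).
Proof.
move=> n_gt0 n_even; have /eqP n_double : n == (n./2).*2.
  by rewrite -{1}(odd_double_half n) (negbTE n_even) add0n.
move: (n./2) n_double n_gt0 => [|k] -> // _.
rewrite bin2 -doubleMl doubleK subn1 doubleS /= !oddD !oddM /= odd_double.
by case: (odd k).
Qed.

Lemma conjC_expNi (R : realType) k : ((- 'i : R[i]) ^+ k)^* = (-1) ^+ k * (- 'i) ^+ k.
Proof. by rewrite rmorphXn rmorphN /= conjCi -exprMn mulN1r. Qed.

Local Open Scope complex_scope.

Section CliffordRepresentation.
Variables (R : realType) (n m : nat) (G E : 'M[R]_n) (Gam : 'I_n -> 'M[R[i]]_m).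
Variable H : 'M[R[i]]_m.
Hypotheses (rep : cliff_rep G Gam) (onb : pseudo_orthonormal_basis G E).
Hypothesis compat : c_compatible Gam H.
Local Notation rho := (cliff_rho Gam).

Lemma cliff_rhoD u v : rho (u + v) = rho u + rho v.
Proof.
rewrite /cliff_rho -big_split /=; apply: eq_bigr => j _.
by rewrite mxE rmorphD scalerDl.
Qed.

Lemma cliff_rho_mulmx k (x : 'rV[R]_k) (A : 'M[R]_(k, n)) :
  rho (x *m A) = \sum_(l < k) (x 0 l)%:C *: rho (row l A).
Proof.
rewrite /cliff_rho; under eq_bigr do rewrite mxE rmorph_sum scaler_suml.
rewrite exchange_big /=; apply: eq_bigr => l _; rewrite scaler_sumr.
by apply: eq_bigr => j _; rewrite !mxE rmorphM scalerA.
Qed.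

Lemma cliff_rho_polar u v :
  rho u * rho v + rho v * rho u = (bilf G u v + bilf G v u)%:C%:M.
Proof.
have := rep (u + v); rewrite cliff_rhoD mulrDl !mulrDr.
have -> : quadf G (u + v) = quadf G u + quadf G v + (bilf G u v + bilf G v u).
  by rewrite !quadfE bilfDl !bilfDr; ring.
rewrite !rmorphD /= -rep -(rep v) => sqr_uv.
apply: (addrI (rho u * rho u + rho v * rho v)).
by rewrite -sqr_uv addrACA (addrC (rho v * rho v)).
Qed.

Lemma cliff_rho_anticomm u v : bilf G u v + bilf G v u = 0 ->
  rho u * rho v = - (rho v * rho u).
Proof.
by move=> uv_orth; apply/eqP; rewrite -addr_eq0 cliff_rho_polar uv_orth !raddf0.
Qed.

Lemma basis_anticomm j k : j != k ->
  rho (row j E) * rho (row k E) = - (rho (row k E) * rho (row j E)).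
Proof.
move=> njk; apply: cliff_rho_anticomm.
by rewrite !bilf_basis // (negbTE njk) eq_sym (negbTE njk) addr0.
Qed.

Definition cliff_volume := \prod_(k < n) rho (row k E).

Hypothesis n_even : ~~ odd n.

Lemma basis_volume_anticomm j :
  rho (row j E) * cliff_volume = - (cliff_volume * rho (row j E)).
Proof.
rewrite /cliff_volume (@mulr_prod_anticomm _ _ (fun k => rho (row k E))).
  2: exact: basis_anticomm.
have -> : count (predC1 j) (index_enum 'I_n) = n.-1.
  by rewrite -size_filter -[n in RHS]card_ord -(cardC1 j) cardE /enum_mem.
rewrite -signr_odd; have n_gt0 : (0 < n)%N := leq_ltn_trans (leq0n j) (ltn_ord j).
have -> : odd n.-1 by move: n_even; rewrite -{1}(prednK n_gt0) /= negbK.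
by rewrite expr1 mulN1r.
Qed.

Lemma cliff_volume_anticomm v : rho v * cliff_volume = - (cliff_volume * rho v).
Proof.
have [E_unit _] := onb.
rewrite -(mulmxKV E_unit v) cliff_rho_mulmx mulr_suml mulr_sumr -sumrN.
apply: eq_bigr => k _; have := basis_volume_anticomm k.
by rewrite -!mulmxE -scalemxAl => ->; rewrite scalerN scalemxAr.
Qed.

Lemma chirality_anticomm v : rho v * chirality Gam E = - (chirality Gam E * rho v).
Proof.
have := cliff_volume_anticomm v.
by rewrite /chirality -!mulmxE -scalemxAr => ->; rewrite scalerN scalemxAl.
Qed.

Lemma hform_cliff_rho2 u v X Y :
  hform H (rho v *m rho u *m X) Y = hform H X (rho u *m rho v *m Y).
Proof.
by have := compat [:: v; u] X Y; rewrite /cliff_mono /= !big_cons !big_nil !mulr1.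
Qed.

Lemma hform_cliff_volume X Y :
  hform H (cliff_volume *m X) Y = (-1) ^+ 'C(n, 2) * hform H X (cliff_volume *m Y).
Proof.
have := compat [seq row k E | k <- index_enum 'I_n] X Y.
rewrite /cliff_mono big_map -map_rev big_map.
rewrite (@prod_rev_anticomm _ _ (fun k => rho (row k E))) ?index_enum_uniq //; last first.
  exact: basis_anticomm.
have -> : size (index_enum 'I_n) = n.
  by rewrite -[n in RHS]card_ord cardE /enum_mem filter_predT.
move=> ->; rewrite -[in LHS]signr_odd -[in RHS]signr_odd !mulr_sign.
by case: odd; rewrite ?mulNmx ?hformNr.
Qed.

Hypothesis n_gt0 : (0 < n)%N.

(* Conjugating the scalar (-i)^k gives (-1)^k (-i)^k and reversing the volume element
   gives (-1)^C(n,2); the total sign is -1 because k + C(n,2) is odd. *)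
Lemma chirality_skew_adjoint X Y :
  hform H (chirality Gam E *m X) Y = - hform H X (chirality Gam E *m Y).
Proof.
rewrite /chirality -!scalemxAl hformZl hformZr hform_cliff_volume conjC_expNi.
by rewrite mulrACA -exprD -signr_odd odd_half_predn_bin2 // expr1 mulN1r.
Qed.

Lemma hform_chirality_cliff_rho v X Y :
  hform H (chirality Gam E *m X) (rho v *m Y) =
  hform H X (rho v *m (chirality Gam E *m Y)).
Proof.
rewrite chirality_skew_adjoint !mulmxA; have := chirality_anticomm v.
by rewrite -!mulmxE => ->; rewrite mulNmx hformNr.
Qed.

Lemma chirality_eigsp_orthogonal v psi phi :
  chirality Gam E *m psi = - psi -> chirality Gam E *m phi = phi ->
  hform H psi (rho v *m phi) = 0 /\ hform H phi (rho v *m psi) = 0.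
Proof.
move=> chi_psi chi_phi; split; apply/eqP; rewrite -eqNr; apply/eqP.
- by have := hform_chirality_cliff_rho v psi phi; rewrite chi_psi chi_phi hformNl.
- have := hform_chirality_cliff_rho v phi psi.
  by rewrite chi_psi chi_phi mulmxN hformNr => <-.
Qed.

Hypothesis G_sym : G^T = G.

Lemma chirality_eigsp_neutral w c : (2 < n)%N -> quadf G w < 0 ->
  neutral_on (fun psi phi => hform H psi (rho w *m phi)) (eigsp (chirality Gam E) c).
Proof.
move=> n_gt2 w_space; have [u u_space wu_orth] := exists_spacelike_orthogonal onb w n_gt2.
set A := rho w; set B := rho u; set x := (quadf G w)%:C; set y := (quadf G u)%:C.
have sqrA : A *m A = x%:M by rewrite mulmxE rep.
have sqrB : B *m B = y%:M by rewrite mulmxE rep.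
have AB_anticomm : A *m B = - (B *m A).
  by rewrite !mulmxE cliff_rho_anticomm // [bilf G u w]bilfC // wu_orth addr0.
have lam_lt0 : - (x * y) < 0.
  by rewrite oppr_lt0 nmulr_rgt0 -[0]/((0 : R)%:C) ltcR.
apply: (neutral_on_flip lam_lt0).
- by apply: anticomm_unitmx sqrA sqrB AB_anticomm _; rewrite unitfE -oppr_eq0 lt_eqF.
- move=> U; apply: eigsp_stable; rewrite !mulmxE.
  by apply: commr_mul_anticomm; apply: chirality_anticomm.
- move=> z; rewrite trmx_mul trmxK hform_cliff_rho2 !mulmxA.
  by rewrite (anticomm_sandwich sqrA sqrB AB_anticomm) -scalemxAl hformZr.
Qed.

End CliffordRepresentation.

Unset Implicit Arguments. Set Strict Implicit.
Theorem lemma7 (R : realType) (n m : nat)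
  (G : 'M[R]_n) (E : 'M[R]_n) (Gam : 'I_n -> 'M[R[i]]_m) (H : 'M[R[i]]_m)
  (w : 'rV[R]_n) :
  (0 < n)%N -> ~~ odd n ->
  G^T = G ->
  pseudo_orthonormal_basis G E ->
  cliff_rep G Gam ->
  nondeg_herm H ->
  c_compatible Gam H ->
  cliff_irreducible Gam ->
  quadf G w < 0 ->
  let chi := chirality Gam E in
  let hw := fun psi phi => hform H psi (cliff_rho Gam w *m phi) in
  (forall psi phi : 'cV[R[i]]_m,
     chi *m psi = - psi -> chi *m phi = phi ->
     hw psi phi = 0 /\ hw phi psi = 0) /\
  ((2 < n)%N ->
     neutral_on hw (eigsp chi (-1)) /\ neutral_on hw (eigsp chi 1)).
Proof.
move=> n_gt0 n_even G_sym onb rep _ compat _ w_space chi hw; split.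
  exact: (chirality_eigsp_orthogonal rep onb compat n_even n_gt0).
by move=> n_gt2; split; apply: (chirality_eigsp_neutral rep onb compat n_even G_sym).
Qed.
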